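(* Let $h$ be an integer with $1\le h\le u$. If $\beta$ is a root of $S(X)$ of multiplicity at least $2^h$, then for every $j\in\{0,1,\dots,2^h-1\}$ \[ 1+K\big(\eta_{j/2^h}\chi\big)\equiv 0\pmod{2\mathcal{P}\,\mathbb{Z}[\zeta_{2^hk}]}. \]
   Context: Let $p$ be an odd prime, $m\ge1$, $q=p^m$, $\alpha$ a primitive element of $\mathbb{F}_q$, and $T=q-1$; write $T=2^uT'$ with $u\ge1$ and $T'$ odd. The binary SLCE sequence $(s_n)_{n\ge0}$ is defined as follows: $s_n=1$ if $\alpha^n+1$ is a nonzero non-square of $\mathbb{F}_q$, and $s_n=0$ otherwise. Put $S(X)=\sum_{n=0}^{T-1}s_nX^n\in\mathbb{F}_2[X]$. Multiplicities of roots are taken in $\overline{\mathbb{F}_2}[X]$. Let $\beta$ be an element of an algebraic closure of $\mathbb{F}_2$ with $\beta^T=1$ and multiplicative order $k>1$ (so $k$ is odd). Let $f$ be the order of $2$ modulo $k$, and write $\zeta_N=e^{2\pi i/N}$. Let $\mathcal{P}$ be a prime ideal of $\mathbb{Z}[\zeta_k]$ containing $2$. Fix a field isomorphism $\phi:\mathbb{F}_2(\beta)=\mathbb{F}_{2^f}\to\mathbb{Z}[\zeta_k]/\mathcal{P}$, and let $\zeta$ be the unique complex $k$-th root of unity with $\phi(\beta)=\zeta+\mathcal{P}$. Multiplicative characters of $\mathbb{F}_q$ are homomorphisms $\mathbb{F}_q^*\to\mathbb{C}^*$, extended by value $0$ at $0$. For a rational $j$ with $(q-1)j\in\mathbb{Z}$,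 $\eta_j$ is the character with $\eta_j(\alpha)=e^{2\pi ij}$. Let $\rho=\eta_{1/2}$ be the quadratic character. Let $\chi$ be the character with $\chi(\alpha^n)=\zeta^n$. For a character $\psi$, set $K(\psi)=\sum_{x\in\mathbb{F}_q}\rho(x)\psi(1-x)$. For an ideal $I$ of $\mathbb{Z}[\zeta_k]$, $I\,\mathbb{Z}[\zeta_{2^hk}]$ is the ideal it generates in $\mathbb{Z}[\zeta_{2^hk}]$. *)

From HB Require Import structures.
From mathcomp Require Import all_boot all_order all_algebra all_field.
Set Implicit Arguments. Unset Strict Implicit. Unset Printing Implicit Defensive.
Import Order.TTheory GRing.Theory Num.Theory.
Local Open Scope ring_scope.

(* zeta_N = e^{2 pi i / N} in algC :  N.-root (-1) = e^{i pi / N}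
   (the root with minimal nonnegative argument), squared. *)
Definition zetaN (N : nat) : algC := (N.-root (-1)) ^+ 2.

Definition Zcyc (N : nat) (x : algC) : Prop :=
  exists p : {poly int}, x = (map_poly intr p).[zetaN N].

(* x lies in the ideal I Z[zeta_N] generated in Z[zeta_N] by 2 I,
   i.e. x = sum_i 2 * p_i * r_i with p_i in I, r_i in Z[zeta_N]. *)
Definition in_ext_ideal2 (I : algC -> Prop) (N : nat) (x : algC) : Prop :=
  exists rs : seq (algC * algC),
    (forall r, r \in rs -> I r.1 /\ Zcyc N r.2) /\
    x = \sum_(r <- rs) 2 * r.1 * r.2.

(* discrete logarithm base a in F (meaningful for a primitive, x <> 0) *)
Definition dlog (F : finFieldType) (a x : F) : nat :=
  index x (mkseq (fun n => a ^+ n) #|F|.-1).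

(* the multiplicative character with value w at the primitive element a,
   extended by 0 at 0 *)
Definition mchar (F : finFieldType) (a : F) (w : algC) (x : F) : algC :=
  if x == 0 then 0 else w ^+ dlog a x.

Definition rho (F : finFieldType) (a : F) : F -> algC := mchar a (-1).

Definition Ksum (F : finFieldType) (a : F) (psi : F -> algC) : algC :=
  \sum_(x : F) rho a x * psi (1 - x).

Definition slce (F : finFieldType) (a : F) (n : nat) : bool :=
  (a ^+ n + 1 != 0) && ~~ [exists y : F, y ^+ 2 == a ^+ n + 1].

(* S(X) = sum_{n<T} s_n X^n, viewed (via F_2 -> L) in L[X] for a field L of
   characteristic 2 *)
Definition Spoly (F : finFieldType) (a : F) (L : fieldType) : {poly L} :=
  \poly_(n < #|F|.-1) ((slce a n)%:R : L).

(* Let om = xi^j zeta be the value at alpha of psi = eta_{j/2^h} chi, and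
   M = 2^h.  Substituting x = 1 + alpha^n in K(psi), the quadratic character
   rho(1 + alpha^n) equals 1 - 2 s_n except at n = T/2, so the geometric sum of
   the om^n cancels and 1 + K(psi) = -2 om^(T/2) sum_{s_n = 1} om^n.  Grouping n
   by its residue r mod M gives -2 om^(T/2) sum_r xi^(jr) A_r with
   A_r = sum_{n = r mod M, s_n = 1} zeta^n.  In characteristic 2,
   (X - beta)^M = X^M - beta^M, and multiplication by X^M - c preserves the
   decomposition of a polynomial into residue classes of exponents mod M; hence
   each residue part of S(X) vanishes at beta, i.e. A_r lies in P. *)

From HB Require Import structures.
From mathcomp Require Import all_boot all_order all_algebra all_field.
From mathcomp Require Import ring zify.
Set Implicit Arguments. Unset Strict Implicit. Unset Printing Implicit Defensive.
Import Order.TTheory GRing.Theory Num.Theory.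
Local Open Scope ring_scope.

Lemma unity_root_sum_eq0 (R : idomainType) (x : R) e :
  x ^+ e = 1 -> x != 1 -> \sum_(i < e) x ^+ i = 0.
Proof.
move=> xe1 x_neq1; apply/eqP; have := subrX1 x e.
by rewrite xe1 subrr => /esym/eqP; rewrite mulf_eq0 subr_eq0 (negbTE x_neq1).
Qed.

Lemma normC_expr_eqN1 (v : algC) n : (0 < n)%N -> v ^+ n = -1 -> `|v| = 1.
Proof.
move=> n_gt0 vn; apply/eqP; rewrite -(pexpr_eq1 n_gt0) ?normr_ge0 //.
by rewrite -normrX vn normrN normr1.
Qed.

Lemma sqr_normC_1subr (v : algC) : `|v| = 1 -> `|1 - v| ^+ 2 = 2 - 2 * 'Re v.
Proof.
move=> v1; have vv : v * v^* = 1 by rewrite -normCK v1 expr1n.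
rewrite normCK rmorphB /= rmorph1 ReE [2 * _]mulrC divfK ?pnatr_eq0 //.
by rewrite mulrBl !mulrBr vv; ring.
Qed.

Lemma Re_le_rootCN1 n (w : algC) : (0 < n)%N -> w ^+ n = -1 ->
  'Re w <= 'Re (n.-root (-1)).
Proof.
move=> n_gt0 wn; case/real_ge0P: (Creal_Im w) => [Im_ge0|Im_lt0].
  exact: rootC_Re_max.
rewrite -Re_conj; apply: rootC_Re_max => //.
  by rewrite -rmorphXn /= wn rmorphN1.
by rewrite Im_conj oppr_ge0 ltW.
Qed.

(* The e-th roots w_t of y satisfy 1 - y = (1 - w_t) S_t with S_t their
   geometric sums; the S_t add up to e, so they cannot all have norm <= 1
   unless they are all 1, which would force all w_t to coincide. *)
Lemma exists_rootC_closer_to1 (y : algC) e : (1 < e)%N -> y != 0 -> y != 1 ->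
  exists2 w, w ^+ e = y & `|1 - w| < `|1 - y|.
Proof.
move=> e_gt1 y_neq0 y_neq1; have e_gt0 : (0 < e)%N by apply: ltnW.
have [eps eps_prim] := C_prim_root_exists e_gt0.
pose w (t : 'I_e) := e.-root y * eps ^+ t.
have wE t : w t ^+ e = y.
  by rewrite exprMn rootCK // exprAC (prim_expr_order eps_prim) expr1n mulr1.
pose S t := \sum_(i < e) w t ^+ i.
have factor_1suby t : 1 - y = (1 - w t) * S t.
  by rewrite -[1 - y]opprB -(wE t) subrX1 -mulNr opprB.
have sumS : \sum_t S t = e%:R.
  rewrite exchange_big (bigD1 (Ordinal e_gt0)) //=.
  under eq_bigr do rewrite expr0.
  rewrite sumr_const card_ord big1 ?addr0 // => i i_neq0.
  have i_gt0 : (0 < i)%N.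
    by rewrite lt0n; apply: contra i_neq0 => /eqP i0; apply/eqP/val_inj.
  have eps_i_neq1 : eps ^+ i != 1.
    rewrite -(prim_order_dvd eps_prim); apply/negP => /(dvdn_leq i_gt0).
    by rewrite leqNgt ltn_ord.
  under eq_bigr do rewrite exprMn exprAC.
  rewrite -mulr_sumr unity_root_sum_eq0 ?mulr0 //.
  by rewrite exprAC (prim_expr_order eps_prim) expr1n.
have [t St_gt1] : exists t, 1 < `|S t|.
  apply/existsP; apply: contraT => /existsPn S_le1.
  have S1 : forall t, true -> S t = 1.
    apply: (normC_sum_upper (G := fun=> 1)) => [t _|].
      by rewrite real_leNgt ?S_le1 ?real1 ?normr_real.
    by rewrite sumS sumr_const card_ord.
  have wy t : w t = y by apply: (subrI 1); rewrite (factor_1suby t) S1 ?mulr1.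
  have root_neq0 : e.-root y != 0 by rewrite rootC_eq0.
  have := wy (Ordinal e_gt1); rewrite -(wy (Ordinal e_gt0)) /w /= expr0 expr1.
  move=> /(mulfI root_neq0) eps1.
  by have := prim_order_dvd eps_prim 1; rewrite expr1 eps1 eqxx dvdn1 gtn_eqF.
exists (w t) => //.
rewrite (factor_1suby t) normrM ltr_pMr // normr_gt0 subr_eq0 eq_sym.
by apply: contraNneq y_neq1 => w1; rewrite -(wE t) w1 expr1n.
Qed.

Lemma prim_expr_half (R : idomainType) (z : R) m :
  (m.*2).-primitive_root z -> z ^+ m = -1.
Proof.
move=> z_prim; have m_gt0 : (0 < m)%N by rewrite -double_gt0 (prim_order_gt0 z_prim).
have /eqP : (z ^+ m) ^+ 2 = 1 by rewrite -exprM muln2 prim_expr_order.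
rewrite sqrf_eq1 -(prim_order_dvd z_prim) => /orP[/(dvdn_leq m_gt0)|/eqP //].
by rewrite -addnn -[X in (_ <= X)%N]addn0 leq_add2l leqNgt m_gt0.
Qed.

Lemma normC_1subr_lt (v w : algC) : `|v| = 1 -> `|w| = 1 ->
  (`|1 - w| < `|1 - v|) = ('Re v < 'Re w).
Proof.
move=> v1 w1; rewrite -(ltr_pXn2r (n := 2)) ?nnegrE ?normr_ge0 //.
by rewrite !sqr_normC_1subr // ltrD2l ltrN2 ltr_pM2l ?ltr0n.
Qed.

(* If the order of y = n.-root (-1) were a proper divisor d of 2n, then 2n/d
   would be odd and > 1, and some (2n/d)-th root of y would be a root of
   x^n = -1 closer to 1 than y, contradicting the maximality of 'Re y. *)
Lemma rootCN1_prim n : (0 < n)%N -> (n.*2).-primitive_root (n.-root (-1 : algC)).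
Proof.
move=> n_gt0; set y := n.-root (-1 : algC).
have yn : y ^+ n = -1 by rewrite rootCK.
have N1_neq1 : (-1 : algC) != 1 by rewrite lt_eqF // (lt_trans (ltrN10 _) ltr01).
have [d y_prim d_dvd] : {d | d.-primitive_root y & (d %| n.*2)%N}.
  by apply: prim_order_exists; rewrite ?double_gt0 // -addnn exprD yn mulrNN mulr1.
have /dvdnP[e n2E] := d_dvd.
have e_odd : odd e.
  apply: contraNT N1_neq1 => e_even; rewrite -yn -(prim_order_dvd y_prim).
  have -> : n = (e./2 * d)%N.
    apply: double_inj; rewrite n2E doubleMl -{1}[e]odd_double_half.
    by rewrite (negbTE e_even).
  exact: dvdn_mull.
have [e_le1|e_gt1] := leqP e 1.
  have e1 : e = 1%N by case: e e_odd e_le1 {n2E} => [|[|]].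
  by rewrite n2E e1 mul1n.
have d_even : d = (d./2).*2.
  have /esym d_odd : false = odd d by rewrite -(odd_double n) n2E oddM e_odd.
  by rewrite -[LHS]odd_double_half d_odd.
have y_neq0 : y != 0 by rewrite (prim_root_eq0 y_prim) -lt0n (prim_order_gt0 y_prim).
have y_neq1 : y != 1 by apply: contra N1_neq1 => /eqP y1; rewrite -yn y1 expr1n.
have [w we w_closer] := exists_rootC_closer_to1 e_gt1 y_neq0 y_neq1.
have wn : w ^+ n = -1.
  rewrite -(@prim_expr_half _ y (d./2)) -?d_even // -we -exprM; congr (_ ^+ _).
  by apply: double_inj; rewrite n2E doubleMr -d_even.
move: w_closer; rewrite normC_1subr_lt ?(normC_expr_eqN1 n_gt0) //.
by move=> /lt_geF; rewrite (Re_le_rootCN1 n_gt0 wn).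
Qed.

Lemma zetaN_prim n : (0 < n)%N -> n.-primitive_root (zetaN n).
Proof.
move=> n_gt0; have n_dvd : (n %| n.*2)%N by rewrite -muln2 dvdn_mulr.
by have := dvdn_prim_root (rootCN1_prim n_gt0) n_dvd; rewrite -muln2 mulKn.
Qed.

Section IntegersOfCyclotomicField.
Variable n : nat.

Lemma Zcyc0 : Zcyc n 0.
Proof. by exists 0; rewrite rmorph0 horner0. Qed.

Lemma Zcyc1 : Zcyc n 1.
Proof. by exists 1; rewrite rmorph1 hornerC. Qed.

Lemma Zcyc_add x y : Zcyc n x -> Zcyc n y -> Zcyc n (x + y).
Proof. by move=> [p ->] [q ->]; exists (p + q); rewrite rmorphD hornerD. Qed.

Lemma Zcyc_opp x : Zcyc n x -> Zcyc n (- x).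
Proof. by move=> [p ->]; exists (- p); rewrite rmorphN hornerN. Qed.

Lemma Zcyc_mul x y : Zcyc n x -> Zcyc n y -> Zcyc n (x * y).
Proof. by move=> [p ->] [q ->]; exists (p * q); rewrite rmorphM hornerM. Qed.

Lemma Zcyc_exp x m : Zcyc n x -> Zcyc n (x ^+ m).
Proof.
move=> Zx; elim: m => [|m IHm]; first exact: Zcyc1.
by rewrite exprS; apply: Zcyc_mul.
Qed.

Lemma Zcyc_sum (I : Type) (r : seq I) (P : pred I) (f : I -> algC) :
  (forall i, Zcyc n (f i)) -> Zcyc n (\sum_(i <- r | P i) f i).
Proof.
move=> Zf; elim: r => [|i r IHr]; first by rewrite big_nil; apply: Zcyc0.
by rewrite big_cons; case: (P i) => //; apply: Zcyc_add.
Qed.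

Lemma Zcyc_unity x : (0 < n)%N -> x ^+ n = 1 -> Zcyc n x.
Proof.
move=> n_gt0 /(prim_rootP (zetaN_prim n_gt0)) [i ->].
by exists 'X^i; rewrite map_polyXn hornerXn.
Qed.

End IntegersOfCyclotomicField.

Lemma Ksum_mcharM (F : finFieldType) (a : F) (w z : algC) :
  Ksum a (fun x => mchar a w x * mchar a z x) = Ksum a (mchar a (w * z)).
Proof.
by apply: eq_bigr => x _; rewrite /mchar; case: eqP; rewrite ?mul0r // exprMn.
Qed.

Section PrimitiveElement.
Variables (F : finFieldType) (a : F).
Hypothesis a_prim : #|F|.-1.-primitive_root a.
Local Notation T := #|F|.-1.

Lemma expr_prim_neq0 n : a ^+ n != 0.
Proof.
by rewrite expf_neq0 // (prim_root_eq0 a_prim) -lt0n (prim_order_gt0 a_prim).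
Qed.

Lemma dlog_expr n : dlog a (a ^+ n) = (n %% T)%N.
Proof.
have T_gt0 := prim_order_gt0 a_prim.
have powers_uniq : uniq (mkseq (fun m => a ^+ m) T).
  rewrite map_inj_in_uniq ?iota_uniq // => i j.
  rewrite !mem_iota !add0n => /andP[_ iT] /andP[_ jT] /eqP.
  by rewrite (eq_prim_root_expr a_prim) !modn_small // => /eqP.
rewrite /dlog -(prim_expr_mod a_prim).
by rewrite -{1}(nth_mkseq 0 _ (ltn_pmod n T_gt0)) index_uniq ?size_mkseq ?ltn_pmod.
Qed.

Lemma mchar_expr (w : algC) n : w ^+ T = 1 -> mchar a w (a ^+ n) = w ^+ n.
Proof. by move=> wT; rewrite /mchar (negbTE (expr_prim_neq0 n)) dlog_expr expr_mod. Qed.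

Lemma finField_unit_expr x : x != 0 -> {i : 'I_T | x = a ^+ i}.
Proof.
move=> x_neq0; apply: (prim_rootP a_prim); apply: (mulfI x_neq0).
rewrite mulr1 -exprS prednK ?expf_card // (cardD1 0) inE //.
Qed.

Lemma half_order_lt : (T./2 < T)%N.
Proof. by have := prim_order_gt0 a_prim; rewrite ltn_half_double -addnn; lia. Qed.

Lemma sum_finField_expr (V : nmodType) (f : F -> V) :
  \sum_x f x = f 0 + \sum_(n < T) f (a ^+ n).
Proof.
have expr_inj : injective (fun i : 'I_T => a ^+ i).
  move=> i j /eqP; rewrite (eq_prim_root_expr a_prim) !modn_small //.
  by move/eqP/val_inj.
have -> : \sum_(n < T) f (a ^+ n) =
          \sum_(x <- [seq a ^+ i | i : 'I_T <- index_enum 'I_T]) f x.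
  by rewrite big_map.
rewrite (bigD1 0) //= -big_filter; congr (_ + _); apply/perm_big/uniq_perm.
- exact/filter_uniq/index_enum_uniq.
- by rewrite (map_inj_uniq expr_inj) index_enum_uniq.
move=> x; rewrite mem_filter mem_index_enum andbT.
apply/idP/mapP => [/finField_unit_expr[i ->]|[i _ ->]]; last exact: expr_prim_neq0.
by exists i; rewrite ?mem_index_enum.
Qed.

Section EvenOrder.
Hypothesis T_even : ~~ odd T.

Lemma expr_prim_half : a ^+ T./2 = -1.
Proof. by apply: prim_expr_half; rewrite even_halfK. Qed.

Lemma signr_T : (-1 : algC) ^+ T = 1.
Proof. by rewrite -signr_odd (negbTE T_even). Qed.

Lemma rho_neq0 x : x != 0 -> rho a x = if [exists y, y ^+ 2 == x] then 1 else -1.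
Proof.
move=> x_neq0; rewrite /rho; case: existsP => [[y /eqP y2]|no_sqrt].
  have [j yE] : {j : 'I_T | y = a ^+ j}.
    by apply: finField_unit_expr; apply: contraNneq x_neq0 => y0; rewrite -y2 y0 expr0n.
  by rewrite -y2 yE -exprM mchar_expr ?signr_T // mulnC exprM sqrrN !expr1n.
have [i xE] := finField_unit_expr x_neq0; rewrite xE mchar_expr ?signr_T // -signr_odd.
case: (boolP (odd i)) => // i_even; case: no_sqrt.
by exists (a ^+ i./2); rewrite xE -exprM muln2 even_halfK.
Qed.

Lemma rho_1addr_expr n : (n < T)%N ->
  rho a (1 + a ^+ n) = 1 - (n == T./2)%:R - 2 * (slce a n)%:R.
Proof.
move=> nT; rewrite /slce addrC; case: eqP => [->|n_neq_half].
  by rewrite expr_prim_half addNr eqxx /rho /mchar eqxx /= mulr0 subr0 subrr.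
have sum_neq0 : a ^+ n + 1 != 0.
  rewrite addr_eq0 -expr_prim_half (eq_prim_root_expr a_prim) !modn_small //.
    exact/eqP.
  exact: half_order_lt.
rewrite rho_neq0 // sum_neq0 /=; case: existsP => _ /=; ring.
Qed.

Lemma Ksum_mchar (om : algC) : om ^+ T = 1 -> om != 1 ->
  Ksum a (mchar a om) = -1 - 2 * om ^+ T./2 * \sum_(n < T | slce a n) om ^+ n.
Proof.
move=> omT om_neq1; set eps := om ^+ T./2.
have eps2 : eps * eps = 1 by rewrite -expr2 -exprM muln2 even_halfK.
rewrite /Ksum (reindex_inj (addrI 1)) /= (sum_finField_expr (fun y => _ * _)).
have mchar0 : mchar a om 0 = 0 by rewrite /mchar eqxx.
rewrite addr0 subrr mchar0 mulr0 add0r.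
pose term (n : 'I_T) := (n == T./2 :> nat)%:R * (eps * om ^+ n).
rewrite (eq_bigr (fun n : 'I_T =>
  eps * om ^+ n - term n - 2 * (slce a n)%:R * (eps * om ^+ n))).
  rewrite !sumrB -mulr_sumr unity_root_sum_eq0 ?mulr0 // sub0r.
  have -> : \sum_(i < T) term i = 1.
    rewrite (bigD1 (Ordinal half_order_lt)) //= /term eqxx mul1r eps2.
    rewrite big1 ?addr0 // => i.
    by rewrite -val_eqE /= => /negbTE ->; rewrite mul0r.
  rewrite [in RHS]big_mkcond /= mulr_sumr; congr (_ - _); apply: eq_bigr => i _.
  by case: (slce a i); rewrite /= ?mulr1 ?mulr0 ?mul0r // mulrA.
move=> n _; rewrite opprD addNKr -mulN1r -expr_prim_half -exprD mchar_expr //.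
rewrite exprD -/eps rho_1addr_expr // /term; ring.
Qed.

End EvenOrder.
End PrimitiveElement.

Section ResiduePart.
Variables (L : fieldType) (m r : nat).

Definition poly_residue (p : {poly L}) : {poly L} :=
  \poly_(i < size p) (if (i %% m == r)%N then p`_i else 0).

Lemma coef_poly_residue p i :
  (poly_residue p)`_i = if (i %% m == r)%N then p`_i else 0.
Proof. by rewrite coef_poly; case: ltnP => // /(nth_default 0) ->; case: ifP. Qed.

Lemma poly_residueM_XnsubC p c :
  poly_residue (p * ('X^m - c%:P)) = poly_residue p * ('X^m - c%:P).
Proof.
apply/polyP => i; rewrite coef_poly_residue !mulrBr !coefB !coefMXn !coefMC.
rewrite !coef_poly_residue; case: ltnP => [_|le_m_i].
  by case: ifP; rewrite ?mul0r ?subrr.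
have -> : ((i - m) %% m = i %% m)%N by rewrite -{2}(subnK le_m_i) modnDr.
by case: ifP; rewrite ?mul0r ?subrr.
Qed.

Lemma root_poly_residue p b : ('X^m - (b ^+ m)%:P) %| p -> root (poly_residue p) b.
Proof.
move=> /divpK <-; rewrite poly_residueM_XnsubC rootM; apply/orP; right.
by rewrite rootE !hornerE subrr.
Qed.

End ResiduePart.

Lemma pchar2_subr_expr2n (R : comNzRingType) (x y : R) h :
  2 \in [pchar R] -> (x - y) ^+ (2 ^ h) = x ^+ (2 ^ h) - y ^+ (2 ^ h).
Proof.
move=> R_pchar2.
by rewrite !(oppr_pchar2 R_pchar2) exprDn_pchar // pnatX pnatE // R_pchar2.
Qed.

Lemma pchar2_expr2n_eq1 (L : fieldType) h (b : L) :
  2 \in [pchar L] -> b ^+ (2 ^ h) = 1 -> b = 1.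
Proof.
move=> L_pchar2 b1; apply/eqP; rewrite -subr_eq0.
have := expf_eq0 (b - 1) (2 ^ h).
by rewrite pchar2_subr_expr2n // b1 expr1n subrr eqxx expn_gt0 => /esym.
Qed.

Lemma sum_expr_residues (R : comNzRingType) (N M : nat) (P : pred nat) (x y : R) :
  (0 < M)%N -> y ^+ M = 1 ->
  \sum_(n < N | P n) (y * x) ^+ n =
  \sum_(r < M) y ^+ r * \sum_(n < N | (n %% M == r)%N && P n) x ^+ n.
Proof.
move=> M_gt0 yM; under [RHS]eq_bigr => r _ do rewrite mulr_sumr big_mkcondl /=.
rewrite exchange_big /=; apply: eq_bigr => n _.
rewrite (bigD1 (Ordinal (ltn_pmod n M_gt0))) //= eqxx big1 ?addr0.
  by rewrite exprMn (expr_mod _ yM).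
by move=> r; rewrite -val_eqE /= eq_sym => /negbTE ->.
Qed.

Lemma in_ext_ideal2_sum (I : algC -> Prop) N (X : eqType) (s : seq X) c
    (u v : X -> algC) :
  Zcyc N c -> (forall i, Zcyc N (u i)) -> (forall i, I (v i)) ->
  in_ext_ideal2 I N (2 * c * \sum_(i <- s) u i * v i).
Proof.
move=> Zc Zu Iv; exists [seq (v i, c * u i) | i <- s]; split.
  by move=> _ /mapP[i _ ->]; split; [apply: Iv | apply: Zcyc_mul].
by rewrite big_map mulr_sumr; apply: eq_bigr => i _ /=; ring.
Qed.

Section ReductionModP.
Variables (L : fieldType) (k : nat) (pi : algC -> L).
Hypothesis pi1 : pi 1 = 1.
Hypothesis piD : forall x y, Zcyc k x -> Zcyc k y -> pi (x + y) = pi x + pi y.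
Hypothesis piM : forall x y, Zcyc k x -> Zcyc k y -> pi (x * y) = pi x * pi y.

Lemma pi_expr x n : Zcyc k x -> pi (x ^+ n) = pi x ^+ n.
Proof.
move=> Zx; elim: n => [|n IHn]; first by rewrite !expr0.
by rewrite !exprS piM ?IHn //; apply: Zcyc_exp.
Qed.

Lemma pi_sum (I : Type) (r : seq I) (P : pred I) (f : I -> algC) :
  (forall i, Zcyc k (f i)) ->
  pi (\sum_(i <- r | P i) f i) = \sum_(i <- r | P i) pi (f i).
Proof.
move=> Zf; elim: r => [|i r IHr].
  have := piD (Zcyc0 k) (Zcyc0 k); rewrite !big_nil addr0 => pi00.
  by apply: (addrI (pi 0)); rewrite addr0 -pi00.
by rewrite !big_cons; case: (P i) => //; rewrite piD ?IHr //; apply: Zcyc_sum.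
Qed.

Lemma pi_slce_residue_sum (F : finFieldType) (a : F) M r zeta :
  Zcyc k zeta -> ('X^M - (pi zeta ^+ M)%:P) %| Spoly a L ->
  pi (\sum_(n < #|F|.-1 | (n %% M == r)%N && slce a n) zeta ^+ n) = 0.
Proof.
move=> Zzeta /(@root_poly_residue _ M r)/eqP.
have size_res : (size (poly_residue M r (Spoly a L)) <= #|F|.-1)%N.
  exact: leq_trans (size_poly _ _) (size_poly _ _).
rewrite (horner_coef_wide _ size_res) => <-.
rewrite pi_sum => [|n]; last exact: Zcyc_exp.
rewrite big_mkcond /=; apply: eq_bigr => n _.
rewrite coef_poly_residue coef_poly ltn_ord pi_expr //.
by case: eqP; case: slce; rewrite /= ?mul1r ?mul0r.
Qed.

Lemma unity2n_mul_neq1 h (y zeta : algC) :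
  2 \in [pchar L] -> (1 < k)%N -> k.-primitive_root (pi zeta) -> Zcyc k zeta ->
  y ^+ (2 ^ h) = 1 -> y * zeta != 1.
Proof.
move=> L_pchar2 k_gt1 pi_zeta_prim Zzeta y1; apply/eqP => yzeta1.
have /(congr1 pi) : zeta ^+ (2 ^ h) = 1.
  by rewrite -[LHS]mul1r -y1 -exprMn yzeta1 expr1n.
rewrite pi_expr // pi1 => /(pchar2_expr2n_eq1 L_pchar2) pi_zeta1.
have := prim_order_dvd pi_zeta_prim 1; rewrite pi_zeta1 expr1 eqxx dvdn1 => /eqP k1.
by rewrite k1 in k_gt1.
Qed.

End ReductionModP.

Theorem mainTheorem7
  (p : nat) (F : finFieldType)
  (hp : prime p) (hodd : odd p) (hchar : p \in [pchar F])
  (alpha : F) (halpha : #|F|.-1.-primitive_root alpha)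
  (h : nat) (h1 : (1 <= h)%N) (hu : (h <= logn 2 #|F|.-1)%N)
  (L : fieldType) (hL : 2 \in [pchar L])
  (beta : L) (k : nat) (hbT : beta ^+ #|F|.-1 = 1)
  (hk : k.-primitive_root beta) (hk1 : (1 < k)%N)
  (P : algC -> Prop) (pi : algC -> L) (zeta : algC)
  (pi1 : pi 1 = 1)
  (piD : forall x y, Zcyc k x -> Zcyc k y -> pi (x + y) = pi x + pi y)
  (piM : forall x y, Zcyc k x -> Zcyc k y -> pi (x * y) = pi x * pi y)
  (pi_img : forall y : L, (exists x, Zcyc k x /\ pi x = y) <->
                          (exists q : {poly int}, y = (map_poly intr q).[beta]))
  (hP : forall x, P x <-> (Zcyc k x /\ pi x = 0))
  (hP2 : P 2)
  (hzeta : zeta ^+ k = 1) (hpizeta : pi zeta = beta)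
  (hmult : (('X - beta%:P) ^+ (2 ^ h) %| Spoly alpha L)%R) :
  forall j : nat, (j < 2 ^ h)%N ->
    in_ext_ideal2 P (2 ^ h * k)
      (1 + Ksum alpha (fun x => mchar alpha (zetaN (2 ^ h) ^+ j) x
                                * mchar alpha zeta x)).
Proof.
move=> j j_lt; set T := #|F|.-1; set M := (2 ^ h)%N.
have M_gt0 : (0 < M)%N by rewrite expn_gt0.
have M_dvd_T : (M %| T)%N by rewrite pfactor_dvdn // (prim_order_gt0 halpha).
have T_even : ~~ odd T by rewrite -dvdn2 (dvdn_trans (dvdn_exp2l 2 h1)).
have k_dvd_T : (k %| T)%N by rewrite (prim_order_dvd hk) hbT.
have Zzeta : Zcyc k zeta by apply: Zcyc_unity; first exact: ltnW.
set y := zetaN M ^+ j.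
have yM : y ^+ M = 1 by rewrite exprAC (prim_expr_order (zetaN_prim M_gt0)) expr1n.
rewrite Ksum_mcharM Ksum_mchar //; first last.
- by apply: (unity2n_mul_neq1 (h := h) pi1 piM hL hk1 _ Zzeta yM); rewrite hpizeta.
- by rewrite exprMn (expr_dvd yM M_dvd_T) (expr_dvd hzeta k_dvd_T) mulr1.
rewrite (sum_expr_residues _ _ _ M_gt0 yM).
set eps := _ ^+ _./2; set S := \sum_(r < M) _.
have -> : 1 + (-1 - 2 * eps * S) = 2 * (- eps) * S by ring.
have Mk_gt0 : (0 < M * k)%N by rewrite muln_gt0 M_gt0 ltnW.
have y_Mk : y ^+ (M * k) = 1 by rewrite (expr_dvd yM) ?dvdn_mulr.
apply: in_ext_ideal2_sum => [|r|r].
- apply/Zcyc_opp/Zcyc_exp/Zcyc_unity => //.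
  by rewrite exprMn y_Mk (expr_dvd hzeta) ?dvdn_mull ?mulr1.
- exact/Zcyc_exp/Zcyc_unity.
apply/hP; split; first by apply: Zcyc_sum => n; apply: Zcyc_exp.
apply: (pi_slce_residue_sum pi1 piD piM _ Zzeta).
by rewrite hpizeta /M rmorphXn -pchar2_subr_expr2n ?pchar_poly.
Qed.
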